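(* Let $\pi>0$ and let $A:[0,D]\to[0,\infty)$ be differentiable with $A'(Q)<0$ for all $Q\in[0,D]$. For a user type $(\beta,\theta)$ with $\beta\in[0,1]$, $\theta>0$, define the willingness-to-pay $\sigma(Q,\beta,\theta)=-[\theta\beta+\pi(1-\beta)]A'(Q)$. Then for any two user types $(\beta,\theta)$, $(\beta',\theta')$ and any $Q,Q'\in[0,D]$, $$\sigma(Q,\beta,\theta)<\sigma(Q,\beta',\theta')\iff\sigma(Q',\beta,\theta)<\sigma(Q',\beta',\theta').$$ Consequently, if the finitely many user types $\{(\beta_m,\theta_k)\}$ are listed as $\Lambda_1(Q),\dots,\Lambda_{KM}(Q)$ in ascending order of $\sigma(Q,\cdot)$, the same list is in ascending order of $\sigma(Q',\cdot)$ for every other $Q'\in[0,D]$, i.e. the ordering does not depend on the data cap.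
   Context: Model: a mobile operator charges an overage price $\pi>0$ per unit of data beyond the data cap. $A(Q)$ denotes a subscriber's expected overage data consumption under data cap $Q\in[0,D]$; the paper takes $A$ to be decreasing and convex. A user type is a pair $(\beta,\theta)$: $\theta>0$ is the user's valuation of one unit of data and $\beta\in[0,1]$ his network substitutability. There are $K$ valuations $0<\theta_1<\dots<\theta_K$ and $M$ substitutabilities $0\le\beta_1<\dots<\beta_M\le1$, giving $KM$ user types. *)

From Stdlib Require Import Reals Lra List Sorting.Sorted.
From Coquelicot Require Import Coquelicot.
Open Scope R_scope.

Definition user_type := (R * R)%type.

Definition valid_type (t : user_type) : Prop :=
  0 <= fst t <= 1 /\ 0 < snd t.

Definition wtp (pi : R) (A : R -> R) (Q : R) (t : user_type) : R :=
  - (snd t * fst t + pi * (1 - fst t)) * Derive A Q.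

From Stdlib Require Import Reals List Sorting.Sorted.
From Coquelicot Require Import Coquelicot.
Open Scope R_scope.

(* sigma(Q, t) factors as w(t) * (-A'(Q)) with a weight w(t) = theta beta + pi (1 - beta)
   independent of the cap and a factor -A'(Q) > 0 independent of the type.  Comparing two
   types at any cap therefore amounts to comparing their weights. *)

Definition wtp_weight (pi : R) (t : user_type) : R := snd t * fst t + pi * (1 - fst t).

Lemma wtp_factor (pi : R) (A : R -> R) (Q : R) (t : user_type) :
  wtp pi A Q t = wtp_weight pi t * - Derive A Q.
Proof. unfold wtp, wtp_weight; ring. Qed.

Lemma Rmult_lt_pos_r_iff (a b c : R) : 0 < c -> (a * c < b * c <-> a < b).
Proof.
  intros Hc; split; intros H.
  - exact (Rmult_lt_reg_r c a b Hc H).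
  - exact (Rmult_lt_compat_r c a b Hc H).
Qed.

Lemma Rmult_le_pos_r_iff (a b c : R) : 0 < c -> (a * c <= b * c <-> a <= b).
Proof.
  intros Hc; split; intros H.
  - exact (Rmult_le_reg_r c a b Hc H).
  - exact (Rmult_le_compat_r c a b (Rlt_le 0 c Hc) H).
Qed.

Lemma wtp_lt_iff_weight (pi : R) (A : R -> R) (Q : R) (t t' : user_type) :
  Derive A Q < 0 -> (wtp pi A Q t < wtp pi A Q t' <-> wtp_weight pi t < wtp_weight pi t').
Proof.
  intros Hd; rewrite !wtp_factor.
  apply Rmult_lt_pos_r_iff, Ropp_0_gt_lt_contravar, Hd.
Qed.

Lemma wtp_le_iff_weight (pi : R) (A : R -> R) (Q : R) (t t' : user_type) :
  Derive A Q < 0 -> (wtp pi A Q t <= wtp pi A Q t' <-> wtp_weight pi t <= wtp_weight pi t').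
Proof.
  intros Hd; rewrite !wtp_factor.
  apply Rmult_le_pos_r_iff, Ropp_0_gt_lt_contravar, Hd.
Qed.

Lemma Sorted_impl {T : Type} (P P' : T -> T -> Prop) (l : list T) :
  (forall x y, P x y -> P' x y) -> Sorted P l -> Sorted P' l.
Proof.
  intros HPP' Hl; induction Hl as [|x l _ IH Hhd]; constructor; auto.
  destruct Hhd; constructor; auto.
Qed.

Theorem lemma1 (pi D : R) (A : R -> R)
  (Hpi : 0 < pi)
  (HA_nonneg : forall Q, 0 <= Q <= D -> 0 <= A Q)
  (HA_diff : forall Q, 0 <= Q <= D -> ex_derive A Q)
  (HA_dec : forall Q, 0 <= Q <= D -> Derive A Q < 0) :
  (forall (t t' : user_type) (Q Q' : R),
      valid_type t -> valid_type t' ->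
      0 <= Q <= D -> 0 <= Q' <= D ->
      (wtp pi A Q t < wtp pi A Q t' <-> wtp pi A Q' t < wtp pi A Q' t'))
  /\
  (forall (l : list user_type) (Q Q' : R),
      List.Forall valid_type l ->
      0 <= Q <= D -> 0 <= Q' <= D ->
      Sorted (fun t t' => wtp pi A Q t <= wtp pi A Q t') l ->
      Sorted (fun t t' => wtp pi A Q' t <= wtp pi A Q' t') l).
Proof.
  split.
  - intros t t' Q Q' _ _ HQ HQ'.
    rewrite (wtp_lt_iff_weight pi A Q t t' (HA_dec Q HQ)).
    rewrite (wtp_lt_iff_weight pi A Q' t t' (HA_dec Q' HQ')).
    reflexivity.
  - intros l Q Q' _ HQ HQ'.
    apply Sorted_impl; intros t t'.
    rewrite (wtp_le_iff_weight pi A Q t t' (HA_dec Q HQ)).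
    rewrite (wtp_le_iff_weight pi A Q' t t' (HA_dec Q' HQ')).
    exact (fun H => H).
Qed.
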